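(* For every integer $g\ge1$, there are at most $2^{g-1}$ numerical semigroups of genus $g$.
   Context: A numerical semigroup is a submonoid $S$ of $(\mathbb N,+)$ with finite complement; its genus is $\#(\mathbb N\setminus S)$. *)

From mathcomp Require Import all_boot.
Set Implicit Arguments. Unset Strict Implicit. Unset Printing Implicit Defensive.

Definition numerical_semigroup (S : nat -> bool) : Prop :=
  [/\ S 0,
      (forall x y, S x -> S y -> S (x + y)) &
      exists gaps : seq nat, forall n, (n \in gaps) = ~~ S n].

Definition has_genus (S : nat -> bool) (g : nat) : Prop :=
  exists gaps : seq nat, [/\ uniq gaps, (forall n, (n \in gaps) = ~~ S n) & size gaps = g].

From mathcomp Require Import all_boot.
From Stdlib Require Import IndefiniteDescription.

Set Implicit Arguments.
Unset Strict Implicit.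
Unset Printing Implicit Defensive.

(* Proof via Kunz coordinates.  Let S be a numerical semigroup of genus g with
   multiplicity m (its least positive element).  For r < m let
   kunz r be the number of gaps congruent to r mod m.  The gaps of class r are
   exactly r, r + m, ..., r + (kunz r - 1) m, so S is determined by m and the
   tuple (kunz r)_(r < m); moreover kunz 0 = 0 and kunz r > 0 for 0 < r < m.
   Hence the partial sums kunz_sum r = kunz 0 + ... + kunz (r - 1), for
   1 <= r <= m, form a strictly increasing list from 0 to g, i.e. a composition
   of g, and this list determines S.  Such a list is in turn determined by its
   interior values, a subset of {1, ..., g - 1}.  This gives an injection from
   numerical semigroups of genus g into subsets of 'I_(g - 1), whence the bound
   2 ^ (g - 1). *)

Lemma downward_closed_initial (P : pred nat) B :
  (forall q q', q' <= q -> P q -> P q') -> (forall q, B <= q -> ~~ P q) ->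
  exists Q, forall q, P q = (q < Q).
Proof.
move=> Pdown; elim: B => [|B IH] PB.
  by exists 0 => q; rewrite ltn0; apply/negbTE/PB.
case PBtrue: (P B).
  exists B.+1 => q; rewrite ltnS; case: (leqP q B) => hq.
    by apply: (Pdown B).
  by apply/negbTE/PB.
by apply: IH => q; rewrite leq_eqVlt => /orP[/eqP<-|/PB //]; rewrite PBtrue.
Qed.

Lemma le_max_seq (s : seq nat) x : x \in s -> x <= \max_(y <- s) y.
Proof. by move=> x_in; apply: (leq_bigmax_seq (F := id) _ x_in). Qed.

(* Lists 0 = a_1 < a_2 < ... < a_k = g, i.e. the partial sums of a
   composition of g. *)
Definition composition_sums (g : nat) (s : seq nat) : Prop :=
  [/\ sorted ltn s, 0 \in s, g \in s & all (fun x => x <= g) s].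

(* The interior values of such a list, as a subset of 'I_(g - 1)
   (the index j stands for the value j + 1). *)
Definition interior_code (g : nat) (s : seq nat) : {set 'I_(g - 1)} :=
  [set j : 'I_(g - 1) | j.+1 \in s].

(* The classical bijection between compositions and subsets, injective half:
   a list of composition sums is determined by its interior code. *)
Lemma interior_code_inj g s1 s2 :
  composition_sums g s1 -> composition_sums g s2 ->
  interior_code g s1 = interior_code g s2 -> s1 = s2.
Proof.
move=> [sort1 zero1 top1 /allP bnd1] [sort2 zero2 top2 /allP bnd2] eq_code.
apply: (irr_sorted_eq ltn_trans ltnn) => // x.
case: (ltngtP x g) => [x_lt_g | g_lt_x | ->]; last by rewrite top1 top2.
- case: (posnP x) => [-> | x_gt0]; first by rewrite zero1 zero2.
  have x_idx : x.-1 < g - 1 by rewrite ltn_subRL add1n prednK.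
  by move/setP/(_ (Ordinal x_idx)): eq_code; rewrite !inE /= prednK.
- apply/idP/idP => [/bnd1 | /bnd2]; by rewrite leqNgt g_lt_x.
Qed.

Record kunz_data (S : nat -> bool) (gaps : seq nat) (m : nat) : Prop := KunzData {
  kd_zero : S 0;
  kd_add : forall x y, S x -> S y -> S (x + y);
  kd_uniq : uniq gaps;
  kd_gaps : forall n, (n \in gaps) = ~~ S n;
  kd_mult_pos : 0 < m;
  kd_mult_mem : S m;
  kd_mult_min : forall p, 0 < p -> p < m -> ~~ S p }.

Lemma kunz_data_exists S g : numerical_semigroup S -> has_genus S g ->
  exists gaps m, kunz_data S gaps m /\ size gaps = g.
Proof.
move=> [S0 Sadd _] [gaps [gaps_uniq gaps_mem gaps_size]].
have large_in_S : forall x, \max_(y <- gaps) y < x -> S x.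
  move=> x; apply: contraTT; rewrite -gaps_mem -leqNgt => x_gap.
  exact: le_max_seq.
have S_pos : exists p, (0 < p) && S p.
  by exists (\max_(y <- gaps) y).+1; rewrite large_in_S.
case: (ex_minnP S_pos) => m /andP [m_pos Sm] m_min.
exists gaps, m; split => //; split => // p p_pos p_lt_m.
by apply/negP => Sp; have := m_min p; rewrite p_pos Sp leqNgt p_lt_m => /(_ isT).
Qed.

Definition kunz (gaps : seq nat) (m r : nat) : nat := count (fun l => l %% m == r) gaps.

Definition kunz_sum (gaps : seq nat) (m r : nat) : nat := count (fun l => l %% m < r) gaps.

Definition kunz_sums (gaps : seq nat) (m : nat) : seq nat :=
  [seq kunz_sum gaps m r | r <- iota 1 m].

Lemma kunz_sumS gaps m r : kunz_sum gaps m r.+1 = kunz_sum gaps m r + kunz gaps m r.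
Proof.
rewrite /kunz_sum /kunz; elim: gaps => //= x s ->; rewrite ltnS leq_eqVlt.
by case: (ltngtP (x %% m) r) => //= _; rewrite ?addnS ?addSn ?addn0 ?add0n.
Qed.

Lemma kunz_sum0 gaps m : kunz_sum gaps m 0 = 0.
Proof. by rewrite /kunz_sum; elim: gaps. Qed.

Lemma kunz_sum_mono gaps m : {homo kunz_sum gaps m : r r' / r <= r'}.
Proof. by move=> r r' le_rr'; apply: sub_count => l /= /leq_trans; apply. Qed.

Lemma kunz_sums_nth gaps m r : r < m -> nth 0 (kunz_sums gaps m) r = kunz_sum gaps m r.+1.
Proof. by move=> r_lt_m; rewrite (nth_map 0) ?size_iota // nth_iota // add1n. Qed.

Section KunzCoordinates.

Context {S : nat -> bool} {gaps : seq nat} {m : nat}.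
Hypothesis K : kunz_data S gaps m.

Lemma mult_multiple_mem q : S (q * m).
Proof.
elim: q => [|q IH]; first by rewrite mul0n (kd_zero K).
by rewrite mulSn (kd_add K) // (kd_mult_mem K).
Qed.

Lemma class_gaps_down r q q' : q' <= q -> ~~ S (r + q * m) -> ~~ S (r + q' * m).
Proof.
move=> le_q'q; apply: contra => S_q'.
have -> : r + q * m = (r + q' * m) + (q - q') * m by rewrite -addnA -mulnDl subnKC.
by rewrite (kd_add K) ?mult_multiple_mem.
Qed.

Lemma kunz_class r q : r < m -> S (r + q * m) = (kunz gaps m r <= q).
Proof.
move=> r_lt_m; have m_pos := kd_mult_pos K.
have [Q gap_class] : exists Q, forall q, ~~ S (r + q * m) = (q < Q).
  apply: (downward_closed_initial (B := (\max_(y <- gaps) y).+1)).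
    by move=> q1 q2 /class_gaps_down; apply.
  move=> q1 big_q1 /=; rewrite negbK; apply: contraLR big_q1.
  rewrite -(kd_gaps K) -leqNgt => /le_max_seq max_bound.
  apply: leq_trans max_bound; apply: leq_trans (leq_addl r _).
  by rewrite -{1}(muln1 q1) leq_mul2l m_pos orbT.
suff -> : kunz gaps m r = Q by rewrite leqNgt -gap_class negbK.
have class_perm : perm_eq [seq l <- gaps | l %% m == r] [seq r + k * m | k <- iota 0 Q].
  apply: uniq_perm; first by rewrite filter_uniq ?(kd_uniq K).
    by rewrite map_inj_uniq ?iota_uniq // => a b /eqP; rewrite eqn_add2l eqn_pmul2r // => /eqP.
  move=> l; rewrite mem_filter; apply/andP/mapP.
    move=> [/eqP l_res l_gap]; exists (l %/ m); last by rewrite addnC -l_res -divn_eq.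
    by rewrite mem_iota add0n /= -gap_class -(kd_gaps K) addnC -l_res -divn_eq.
  move=> [k]; rewrite mem_iota add0n /= => k_lt_Q ->.
  by rewrite (kd_gaps K) gap_class k_lt_Q addnC modnMDl modn_small ?eqxx.
by rewrite /kunz -size_filter (perm_size class_perm) size_map size_iota.
Qed.

Lemma kunz_determines x : S x = (kunz gaps m (x %% m) <= x %/ m).
Proof. by rewrite {1}(divn_eq x m) addnC kunz_class // ltn_pmod // (kd_mult_pos K). Qed.

(* Minimality of the multiplicity: every nonzero class contains a gap. *)
Lemma kunz_pos r : 0 < r -> r < m -> 0 < kunz gaps m r.
Proof.
move=> r_pos r_lt_m; have := kunz_class 0 r_lt_m; rewrite mul0n addn0.
by rewrite (negbTE (kd_mult_min K r_pos r_lt_m)) leqn0 lt0n => <-.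
Qed.

Lemma kunz_sum1 : kunz_sum gaps m 1 = 0.
Proof.
rewrite kunz_sumS kunz_sum0 add0n; apply/eqP; rewrite -leqn0.
by rewrite -(kunz_class 0 (kd_mult_pos K)) mul0n (kd_zero K).
Qed.

Lemma kunz_sum_mult : kunz_sum gaps m m = size gaps.
Proof.
by apply/eqP; rewrite -all_count; apply/allP => l _; rewrite ltn_pmod ?(kd_mult_pos K).
Qed.

Lemma kunz_sums_composition : composition_sums (size gaps) (kunz_sums gaps m).
Proof.
have m_pos := kd_mult_pos K.
split.
- apply: (homo_sorted_in (P := fun r => 0 < r <= m)) (iota_ltn_sorted 1 m).
    move=> r r' /andP [r_pos _] /andP [_ r'_le_m] lt_rr'.
    apply: leq_trans (kunz_sum_mono gaps m lt_rr').
    by rewrite kunz_sumS -addn1 leq_add2l kunz_pos // (leq_trans lt_rr').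
  by apply/allP => r; rewrite mem_iota add1n ltnS.
- by apply/mapP; exists 1; rewrite ?kunz_sum1 // mem_iota leqnn add1n ltnS.
- by apply/mapP; exists m; rewrite ?kunz_sum_mult // mem_iota m_pos add1n ltnS leqnn.
- by apply/allP => _ /mapP [r _ ->]; apply: count_size.
Qed.

End KunzCoordinates.

Lemma kunz_sums_inj S gaps m S' gaps' m' :
  kunz_data S gaps m -> kunz_data S' gaps' m' ->
  kunz_sums gaps m = kunz_sums gaps' m' -> S =1 S'.
Proof.
move=> K K' eq_sums.
have eq_m : m' = m by have := congr1 size eq_sums; rewrite !size_map !size_iota.
subst m'.
have eq_sum r : r <= m -> kunz_sum gaps m r = kunz_sum gaps' m r.
  case: r => [_ | r r_lt_m]; first by rewrite !kunz_sum0.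
  by rewrite -!kunz_sums_nth // eq_sums.
have eq_kunz r : r < m -> kunz gaps m r = kunz gaps' m r.
  move=> r_lt_m; apply/eqP; rewrite -(eqn_add2l (kunz_sum gaps m r)) -kunz_sumS.
  by rewrite (eq_sum r) ?(ltnW r_lt_m) // -kunz_sumS eq_sum.
by move=> x; rewrite (kunz_determines K) (kunz_determines K') eq_kunz // ltn_pmod ?(kd_mult_pos K).
Qed.

Definition semigroup_code (g : nat) (S : nat -> bool) (A : {set 'I_(g - 1)}) : Prop :=
  exists gaps m, [/\ kunz_data S gaps m, size gaps = g & A = interior_code g (kunz_sums gaps m)].
Arguments semigroup_code : clear implicits.

Lemma semigroup_code_exists S g : numerical_semigroup S -> has_genus S g ->
  exists A, semigroup_code g S A.
Proof.
move=> nsS genS; have [gaps [m [K size_gaps]]] := kunz_data_exists nsS genS.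
by exists (interior_code g (kunz_sums gaps m)), gaps, m.
Qed.

Lemma semigroup_code_inj g S S' A :
  semigroup_code g S A -> semigroup_code g S' A -> S =1 S'.
Proof.
move=> [gaps [m [K size_gaps ->]]] [gaps' [m' [K' size_gaps' eq_code]]].
apply: (kunz_sums_inj K K'); apply: (interior_code_inj _ _ eq_code).
  by rewrite -size_gaps; apply: kunz_sums_composition K.
by rewrite -size_gaps'; apply: kunz_sums_composition K'.
Qed.

Theorem corollary2p2 (g : nat) (hg : 1 <= g) (n : nat) (S : 'I_n -> nat -> bool)
  (hS : forall i, numerical_semigroup (S i) /\ has_genus (S i) g)
  (hinj : forall i j, S i =1 S j -> i = j) :
  n <= 2 ^ (g - 1).
Proof.
have code_ex i : exists A, semigroup_code g (S i) A by case: (hS i); apply: semigroup_code_exists.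
pose code i := proj1_sig (constructive_indefinite_description _ (code_ex i)).
have code_spec i : semigroup_code g (S i) (code i) := proj2_sig (constructive_indefinite_description _ _).
have code_inj : injective code.
  by move=> i j eq_ij; apply: hinj; apply: (semigroup_code_inj (code_spec i)); rewrite eq_ij.
have := leq_card code code_inj.
by rewrite card_ord -cardsT -powersetT card_powerset cardsT card_ord.
Qed.
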